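(* Let $p\in(0,1/2)$, $\beta<0$, $\alpha=\frac{2}{2-p}$, $\gamma_\beta=\big[\frac{3}{|\beta|(p+1)}\big]^{1/3}$, $q\in(\frac{p+1}{3},1)$ and $\delta>0$. Let $\zeta\in C([0,\delta])$ satisfy: - $\zeta(0)=0$; - $|\zeta(\varphi)-\gamma_\beta\varphi^{(p+1)/3}|\le\varphi^q$ on $[0,\delta]$; - on $(0,\delta]$, $$\zeta'=\frac{\alpha^2\zeta+\varphi^p\zeta^{-1}}{\alpha(\alpha-1)\varphi-\beta\zeta}\qquad(\ast).$$ Then $\zeta$ extends to a solution of $(\ast)$ on $(0,\infty)$ that is positive and monotone increasing.
   Context: Such a $\zeta$ exists (as a fixed point of the map defined by $\zeta'=(\alpha^2\xi+\varphi^p\xi^{-1})/(\alpha(\alpha-1)\varphi-\beta\xi)$, $\zeta(0)=0$) when $q$ is close to $1$ and $\delta$ is small. *)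

From Stdlib Require Import Reals.
From Coquelicot Require Import Coquelicot.
Open Scope R_scope.

(* Real power x^y for x >= 0, y > 0, with the convention 0^y = 0
   (Stdlib's Rpower gives Rpower 0 y = 1, which is not the intended value). *)
Definition rpow (x y : R) : R := if Rlt_dec 0 x then Rpower x y else 0.

Definition alpha (p : R) : R := 2 / (2 - p).

Definition gamma_beta (p beta : R) : R := rpow (3 / (Rabs beta * (p + 1))) (1/3).

Definition ode_rhs (p beta phi z : R) : R :=
  (alpha p ^ 2 * z + rpow phi p / z) /
  (alpha p * (alpha p - 1) * phi - beta * z).

Definition ode_defined (p beta phi z : R) : Prop :=
  z <> 0 /\ alpha p * (alpha p - 1) * phi - beta * z <> 0.

From Stdlib Require Import Reals Lra.
From Coquelicot Require Import Coquelicot.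
Open Scope R_scope.

(* Proof.  (1) The asymptotics make zeta positive at some point near 0; as zeta is
   continuous and never vanishes on (0, delta], it is positive there.
   (2) Beyond delta we solve the initial value problem Z(delta) = zeta(delta) =: c for
   the field truncated to phi >= delta, z >= c.  The truncated field is continuous,
   globally Lipschitz in z and of linear growth in phi, so Picard iteration in an
   exponentially weighted sup-norm converges on all of [delta, oo).  Since the field
   is nonnegative, Z >= c, hence Z solves the untruncated ODE.
   (3) Gluing zeta and Z at delta, the one-sided derivatives agree, so the glued
   function solves the ODE on (0, oo); it is positive, so its derivative is positive
   and it is increasing. *)

Lemma locally_lipschitz_continuous (f Q : R -> R) :
  (forall X, 0 <= Q X) ->
  (forall X x y, x <= X -> y <= X -> Rabs (f x - f y) <= Q X * Rabs (x - y)) ->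
  forall x, continuous f x.
Proof.
  intros HQ Hlip x. apply filterlim_locally. intros eps.
  set (q := Q (x + 1)). assert (Hq : 0 <= q) by apply HQ.
  assert (Heta : 0 < Rmin 1 (eps / (q + 1))).
  { apply Rmin_pos; [lra | apply Rdiv_lt_0_compat; [apply cond_pos | lra]]. }
  exists (mkposreal _ Heta). intros y Hy.
  change (Rabs (y - x) < Rmin 1 (eps / (q + 1))) in Hy.
  assert (Hy1 := Rlt_le_trans _ _ _ Hy (Rmin_l _ _)).
  assert (Hy2 := Rlt_le_trans _ _ _ Hy (Rmin_r _ _)).
  change (Rabs (f y - f x) < eps).
  apply Rabs_lt_between' in Hy1.
  eapply Rle_lt_trans; [apply (Hlip (x + 1)); lra |]. fold q.
  apply Rle_lt_trans with (q * (eps / (q + 1))).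
  - apply Rmult_le_compat_l; lra.
  - pose proof (cond_pos eps).
    apply Rmult_lt_reg_r with (q + 1); [lra |].
    replace (q * (eps / (q + 1)) * (q + 1)) with (q * eps) by (field; lra). nra.
Qed.

Lemma Rmax_lipschitz x y c : Rabs (Rmax x c - Rmax y c) <= Rabs (x - y).
Proof. unfold Rmax; destruct (Rle_dec x c), (Rle_dec y c); split_Rabs; lra. Qed.

Lemma Rmax_monotone x y c : x <= y -> Rmax x c <= Rmax y c.
Proof. intros; unfold Rmax; destruct (Rle_dec x c), (Rle_dec y c); lra. Qed.

Lemma continuous_Rmax (f : R -> R) c x :
  continuous f x -> continuous (fun y => Rmax (f y) c) x.
Proof.
  intros Hf. apply (continuous_comp f (fun z => Rmax z c)); [exact Hf |].
  apply (locally_lipschitz_continuous _ (fun _ => 1)); [intros; lra |].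
  intros _ u v _ _. rewrite Rmult_1_l. apply Rmax_lipschitz.
Qed.

Lemma positive_on_segment (f : R -> R) (D : R -> Prop) lo hi a b :
  lo <= a <= hi -> lo <= b <= hi ->
  (forall x, lo <= x <= hi -> D x) ->
  (forall x, lo <= x <= hi -> filterlim f (within D (locally x)) (locally (f x))) ->
  (forall x, lo <= x <= hi -> f x <> 0) ->
  0 < f a -> 0 < f b.
Proof.
  intros Ha Hb HD Hf Hnz Hfa.
  set (clamp y := Rmax (Rmin y hi) lo).
  assert (Hlohi : lo <= hi) by lra.
  assert (Hclamp : forall y, lo <= clamp y <= hi).
  { intro y. unfold clamp, Rmin. destruct (Rle_dec y hi);
    unfold Rmax; destruct (Rle_dec _ lo); lra. }
  assert (Hfix : forall y, lo <= y <= hi -> clamp y = y).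
  { intros y Hy. unfold clamp, Rmax, Rmin. destruct (Rle_dec y hi), (Rle_dec y lo); lra. }
  assert (Hclamp_lip : forall u v, Rabs (clamp u - clamp v) <= Rabs (u - v)).
  { intros u v. unfold clamp. eapply Rle_trans; [apply Rmax_lipschitz |].
    unfold Rmin; destruct (Rle_dec u hi), (Rle_dec v hi); split_Rabs; lra. }
  assert (Hcont : forall y, continuous (fun z => f (clamp z)) y).
  { intro y. apply (filterlim_comp _ _ _ clamp f _ (within D (locally (clamp y)))).
    - intros P [eps HP]. exists eps. intros z Hz. apply HP; [| apply HD, Hclamp].
      change (Rabs (clamp z - clamp y) < eps).
      eapply Rle_lt_trans; [apply Hclamp_lip | exact Hz].
    - apply Hf, Hclamp. }
  destruct (Rlt_dec 0 (f b)) as [| Hfb]; [assumption | exfalso].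
  destruct (IVT_gen (fun z => f (clamp z)) a b 0) as [x [_ Hx]].
  - intro y. apply continuity_pt_filterlim, Hcont.
  - rewrite !Hfix by assumption.
    unfold Rmin, Rmax; destruct (Rle_dec (f a) (f b)); lra.
  - exact (Hnz _ (Hclamp x) Hx).
Qed.

Lemma exp_monotone x y : x <= y -> exp x <= exp y.
Proof. intros [Hlt | ->]; [left; apply exp_increasing, Hlt | lra]. Qed.

Lemma ex_RInt_of_continuous (f : R -> R) a b :
  (forall z, continuous f z) -> ex_RInt f a b.
Proof. intros Hf. apply (ex_RInt_continuous (V := R_CompleteNormedModule)). intros; apply Hf. Qed.

Lemma abs_RInt_le_const_any (g : R -> R) u v M :
  (forall t, continuous g t) ->
  (forall t, Rmin u v <= t <= Rmax u v -> Rabs (g t) <= M) ->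
  Rabs (RInt g u v) <= M * Rabs (v - u).
Proof.
  intros Hg Hbound. rewrite Rmult_comm. destruct (Rle_dec u v).
  - rewrite Rmin_left, Rmax_right in Hbound by lra. rewrite (Rabs_right (v - u)) by lra.
    apply abs_RInt_le_const; [lra | apply ex_RInt_of_continuous; exact Hg | exact Hbound].
  - rewrite Rmin_right, Rmax_left in Hbound by lra.
    rewrite <- (opp_RInt_swap g) by (apply ex_RInt_of_continuous; exact Hg).
    rewrite Rabs_Ropp, (Rabs_left (v - u)) by lra. replace (- (v - u)) with (u - v) by ring.
    apply abs_RInt_le_const; [lra | apply ex_RInt_of_continuous; exact Hg | exact Hbound].
Qed.

Lemma half_pow_eventually_small M eps :
  0 < eps -> exists N, forall n, (N <= n)%nat -> M * (/2) ^ n < eps.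
Proof.
  intros Heps.
  assert (Hlim : is_lim_seq (fun n => M * (/2) ^ n) 0).
  { replace (Finite 0) with (Rbar_mult M 0) by (simpl; f_equal; ring).
    apply is_lim_seq_scal_l, is_lim_seq_geom. rewrite Rabs_right; lra. }
  apply is_lim_seq_spec in Hlim. destruct (Hlim (mkposreal eps Heps)) as [N HN].
  exists N. intros n Hn. specialize (HN n Hn). simpl in HN.
  rewrite Rminus_0_r in HN. eapply Rle_lt_trans; [apply Rle_abs | exact HN].
Qed.

Lemma null_of_half_pow_bound a M : (forall n, Rabs a <= M * (/2) ^ n) -> a = 0.
Proof.
  intros Hbound. destruct (Req_dec a 0) as [| Ha]; [assumption | exfalso].
  destruct (half_pow_eventually_small M (Rabs a)) as [N HN]; [apply Rabs_pos_lt, Ha |].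
  specialize (HN N (le_n N)). specialize (Hbound N). lra.
Qed.

Lemma is_lim_seq_abs_bound (u : nat -> R) (l a M : R) N :
  is_lim_seq u l -> (forall n, (N <= n)%nat -> Rabs (u n - a) <= M) -> Rabs (l - a) <= M.
Proof.
  intros Hu Hbound.
  assert (Hlim : is_lim_seq (fun n => Rabs (u n - a)) (Rabs (l - a))).
  { apply (is_lim_seq_abs _ (Finite (l - a))), is_lim_seq_minus'; [exact Hu | apply is_lim_seq_const]. }
  change (Rbar_le (Rabs (l - a)) M).
  apply (is_lim_seq_le_loc (fun n => Rabs (u n - a)) (fun _ => M));
    [| exact Hlim | apply is_lim_seq_const].
  exists N. exact Hbound.
Qed.

Section Picard.

Variables (d c L B0 B1 : R) (G : R -> R -> R).
Hypotheses (Hd : 0 <= d) (HL : 0 <= L) (HB0 : 0 <= B0) (HB1 : 0 <= B1).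
Hypothesis G_continuous : forall Y : R -> R,
  (forall x, continuous Y x) -> forall t, continuous (fun t => G t (Y t)) t.
Hypothesis G_lipschitz : forall t z1 z2, Rabs (G t z1 - G t z2) <= L * Rabs (z1 - z2).
Hypothesis G_growth : forall t z, Rabs (G t z) <= B0 + B1 * Rmax t d.

(* Picard iterates for Y' = G t Y, Y(d) = c, frozen to c on (-oo, d]. *)
Fixpoint picard (n : nat) (x : R) : R :=
  match n with
  | O => c
  | S k => c + RInt (fun t => G t (picard k t)) d (Rmax x d)
  end.

Let growth X := B0 + B1 * Rmax X d.

Lemma growth_nonneg X : 0 <= growth X.
Proof. unfold growth. assert (d <= Rmax X d) by apply Rmax_r. nra. Qed.

Lemma picard_lipschitz n :
  forall X x y, x <= X -> y <= X -> Rabs (picard n x - picard n y) <= growth X * Rabs (x - y).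
Proof.
  induction n as [| n IH]; intros X x y Hx Hy; simpl.
  - rewrite Rminus_diag, Rabs_R0. pose proof (growth_nonneg X). pose proof (Rabs_pos (x - y)). nra.
  - set (g t := G t (picard n t)).
    assert (Hg : forall t, continuous g t).
    { apply G_continuous, (locally_lipschitz_continuous _ growth); [exact growth_nonneg | exact IH]. }
    replace (c + RInt g d (Rmax x d) - (c + RInt g d (Rmax y d))) with (RInt g (Rmax y d) (Rmax x d)).
    2:{ assert (Hchasles : RInt g d (Rmax y d) + RInt g (Rmax y d) (Rmax x d) = RInt g d (Rmax x d))
          by (apply (RInt_Chasles g); apply ex_RInt_of_continuous; exact Hg).
        lra. }
    eapply Rle_trans; [apply (abs_RInt_le_const_any g _ _ (growth X) Hg) |].
    + intros t [_ Ht]. eapply Rle_trans; [apply G_growth |]. unfold growth.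
      assert (Rmax t d <= Rmax X d); [| nra].
      apply Rmax_lub; [| apply Rmax_r]. eapply Rle_trans; [exact Ht |].
      apply Rmax_lub; apply Rmax_monotone; assumption.
    + apply Rmult_le_compat_l; [apply growth_nonneg |].
      rewrite Rabs_minus_sym, (Rabs_minus_sym x). apply Rmax_lipschitz.
Qed.

Lemma picard_continuous n t : continuous (fun t => G t (picard n t)) t.
Proof.
  apply G_continuous. apply (locally_lipschitz_continuous _ growth).
  - exact growth_nonneg.
  - apply picard_lipschitz.
Qed.

Lemma picard_below n x : x <= d -> picard n x = c.
Proof.
  intros Hx. destruct n; simpl; [reflexivity |].
  rewrite Rmax_right, RInt_point by lra. unfold zero; simpl. ring.
Qed.

(* Exponential weight E x = exp (K (x - d)) with K = 2 L + 1 > 2 L: integrating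
   against it gains a factor 1/K, which makes the Picard map a contraction. *)
Let K := 2 * L + 1.
Let weight x := exp (K * (x - d)).
Let A := (B0 + B1 * d + B1) / K.

Lemma K_pos : 0 < K.
Proof. unfold K; lra. Qed.

Lemma A_nonneg : 0 <= A.
Proof.
  unfold A. pose proof K_pos.
  apply Rmult_le_pos; [nra | left; apply Rinv_0_lt_compat; lra].
Qed.

Lemma weight_monotone x y : x <= y -> weight x <= weight y.
Proof.
  intros Hxy. unfold weight. apply exp_monotone.
  apply Rmult_le_compat_l; [apply Rlt_le, K_pos | lra].
Qed.

Lemma weighted_integral_bound (g : R -> R) D x :
  (forall t, continuous g t) -> d <= x -> 0 <= D ->
  (forall t, d <= t <= x -> Rabs (g t) <= K * D * weight t) ->
  Rabs (RInt g d x) <= D * weight x.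
Proof.
  intros Hg Hx HD Hbound.
  assert (Hprim : is_RInt (fun t => K * D * weight t) d x (minus (D * weight x) (D * weight d))).
  { apply (is_RInt_derive (fun t => D * weight t)).
    - intros t _. unfold weight. auto_derive; [exact I |].
      (* restate the goal at type R so that ring recognizes it *)
      change (D * (K * 1 * exp (K * (t + - d))) = K * D * exp (K * (t - d))).
      unfold Rminus. ring.
    - intros t _. apply (ex_derive_continuous (K := R_AbsRing) (V := R_NormedModule)).
      unfold weight. auto_derive. exact I. }
  assert (Habs : Rabs (RInt g d x) <= RInt (fun t => K * D * weight t) d x).
  { eapply Rle_trans; [apply abs_RInt_le; [exact Hx | apply ex_RInt_of_continuous, Hg] |].
    apply RInt_le; [exact Hx | | eexists; exact Hprim | intros t Ht; apply Hbound; lra].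
    apply ex_RInt_of_continuous. intro t. apply continuous_Rabs_comp, Hg. }
  rewrite (is_RInt_unique _ _ _ _ Hprim) in Habs. unfold minus, plus, opp in Habs; simpl in Habs.
  unfold weight at 2 in Habs. rewrite Rminus_diag, Rmult_0_r, exp_0 in Habs. lra.
Qed.

Lemma G_weighted_bound t z : d <= t -> Rabs (G t z) <= K * A * weight t.
Proof.
  intros Ht. eapply Rle_trans; [apply G_growth |]. rewrite Rmax_left by lra.
  assert (HKA : K * A = B0 + B1 * d + B1) by (unfold A; field; pose proof K_pos; lra).
  rewrite HKA.
  assert (Hexp : 1 + K * (t - d) <= weight t) by apply exp_ineq1_le.
  assert (HK1 : 1 <= K) by (unfold K; lra).
  assert (0 <= (B0 + B1 * d) * (K * (t - d))) by (apply Rmult_le_pos; nra).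
  assert (B1 * (t - d) <= B1 * K * (t - d)) by (apply Rmult_le_compat_r; nra).
  assert ((B0 + B1 * d + B1) * (1 + K * (t - d)) <= (B0 + B1 * d + B1) * weight t)
    by (apply Rmult_le_compat_l; nra).
  nra.
Qed.

Lemma picard_step n x : d <= x -> Rabs (picard (S n) x - picard n x) <= A * (/2) ^ n * weight x.
Proof.
  revert x. induction n as [| n IH]; intros x Hx.
  - simpl. rewrite Rmax_left by lra. rewrite Rmult_1_r.
    replace (c + RInt (fun t => G t c) d x - c) with (RInt (fun t => G t c) d x) by lra.
    apply weighted_integral_bound; [apply (picard_continuous O) | exact Hx | exact A_nonneg |].
    intros t Ht. apply G_weighted_bound; lra.
  - change (picard (S (S n)) x) with (c + RInt (fun t => G t (picard (S n) t)) d (Rmax x d)).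
    change (picard (S n) x) with (c + RInt (fun t => G t (picard n t)) d (Rmax x d)).
    rewrite Rmax_left by lra.
    assert (Hdiff : RInt (fun t => G t (picard (S n) t) - G t (picard n t)) d x
                    = RInt (fun t => G t (picard (S n) t)) d x - RInt (fun t => G t (picard n t)) d x)
      by (apply (RInt_minus (fun t => G t (picard (S n) t)));
          apply ex_RInt_of_continuous, picard_continuous).
    replace (c + _ - _) with (RInt (fun t => G t (picard (S n) t) - G t (picard n t)) d x) by lra.
    pose proof A_nonneg. pose proof (pow_lt (/2) (S n) ltac:(lra)).
    apply weighted_integral_bound; [| exact Hx | nra |].
    + intro t. apply (continuous_minus (fun t => G t (picard (S n) t))); apply picard_continuous.
    + intros t Ht. eapply Rle_trans; [apply G_lipschitz |].
      assert (Hpos : 0 <= A * (/2) ^ n * weight t).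
      { apply Rmult_le_pos; [apply Rmult_le_pos; [exact A_nonneg | apply pow_le; lra] |].
        apply Rlt_le, exp_pos. }
      apply Rle_trans with (L * (A * (/2) ^ n * weight t)).
      { apply Rmult_le_compat_l; [exact HL | apply IH; lra]. }
      replace (K * (A * (/2) ^ S n) * weight t) with ((L + /2) * (A * (/2) ^ n * weight t))
        by (unfold K; simpl; field).
      nra.
Qed.

Lemma picard_cauchy n m x : (n <= m)%nat -> d <= x ->
  Rabs (picard m x - picard n x) <= 2 * A * (/2) ^ n * weight x.
Proof.
  intros Hnm Hx.
  assert (Htele : Rabs (picard m x - picard n x) <= 2 * A * ((/2) ^ n - (/2) ^ m) * weight x).
  { induction Hnm as [| m Hnm IH].
    - rewrite !Rminus_diag, Rabs_R0. lra.
    - replace (picard (S m) x - picard n x)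
        with ((picard (S m) x - picard m x) + (picard m x - picard n x)) by ring.
      eapply Rle_trans; [apply Rabs_triang |].
      pose proof (picard_step m x Hx). simpl pow. lra. }
  eapply Rle_trans; [exact Htele |]. apply Rmult_le_compat_r; [apply Rlt_le, exp_pos |].
  pose proof A_nonneg. pose proof (pow_lt (/2) m ltac:(lra)). nra.
Qed.

Definition picard_limit x : R := real (Lim_seq (fun n => picard n x)).

Lemma picard_converges x : is_lim_seq (fun n => picard n x) (picard_limit x).
Proof.
  unfold picard_limit. apply Lim_seq_correct', ex_lim_seq_cauchy_corr. intros eps.
  destruct (Rle_dec x d) as [Hxd | Hxd].
  - exists O. intros n m _ _. rewrite !picard_below, Rminus_diag, Rabs_R0 by exact Hxd.
    apply cond_pos.
  - destruct (half_pow_eventually_small (2 * A * weight x) eps (cond_pos eps)) as [N HN].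
    assert (Hclose : forall n m, (N <= n)%nat -> (n <= m)%nat -> Rabs (picard m x - picard n x) < eps).
    { intros n m Hn Hm. eapply Rle_lt_trans; [apply picard_cauchy; [exact Hm | lra] |].
      replace (2 * A * (/2) ^ n * weight x) with (2 * A * weight x * (/2) ^ n) by ring.
      apply HN, Hn. }
    exists N. intros n m Hn Hm. destruct (Nat.le_ge_cases n m).
    + rewrite Rabs_minus_sym. apply Hclose; assumption.
    + apply Hclose; assumption.
Qed.

Lemma picard_limit_approx n x : d <= x ->
  Rabs (picard_limit x - picard n x) <= 2 * A * (/2) ^ n * weight x.
Proof.
  intros Hx. apply (is_lim_seq_abs_bound _ _ _ _ n (picard_converges x)).
  intros m Hm. apply picard_cauchy; assumption.
Qed.

(* The Lipschitz bounds of the iterates pass to the limit. *)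
Lemma picard_limit_continuous x : continuous picard_limit x.
Proof.
  apply (locally_lipschitz_continuous _ growth); [exact growth_nonneg |].
  intros X u v Hu Hv.
  replace (picard_limit u - picard_limit v) with (picard_limit u - picard_limit v - 0) by ring.
  apply (is_lim_seq_abs_bound (fun n => picard n u - picard n v) _ _ _ O).
  - apply is_lim_seq_minus'; apply picard_converges.
  - intros n _. rewrite Rminus_0_r. apply picard_lipschitz; assumption.
Qed.

Lemma picard_limit_below x : x <= d -> picard_limit x = c.
Proof.
  intros Hx. apply Rminus_diag_uniq, Rabs_eq_0, Rle_antisym; [| apply Rabs_pos].
  apply (is_lim_seq_abs_bound _ _ _ _ O (picard_converges x)).
  intros n _. rewrite picard_below, Rminus_diag, Rabs_R0 by exact Hx. lra.
Qed.

Let flow t := G t (picard_limit t).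

Lemma flow_continuous t : continuous flow t.
Proof. apply G_continuous, picard_limit_continuous. Qed.

Lemma picard_limit_integral x : d <= x -> picard_limit x = c + RInt flow d x.
Proof.
  intros Hx. apply Rminus_diag_uniq.
  replace (picard_limit x - (c + RInt flow d x)) with (picard_limit x - c - RInt flow d x) by ring.
  apply (null_of_half_pow_bound _ (A * weight x + (x - d) * (L * (2 * A * weight x)))). intros n.
  assert (Hsplit : picard_limit x - c - RInt flow d x
    = (picard_limit x - picard (S n) x) + RInt (fun t => G t (picard n t) - flow t) d x).
  { simpl. rewrite Rmax_left by lra.
    assert (RInt (fun t => G t (picard n t) - flow t) d x
            = RInt (fun t => G t (picard n t)) d x - RInt flow d x)
      by (apply (RInt_minus (fun t => G t (picard n t))); apply ex_RInt_of_continuous;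
          [apply picard_continuous | apply flow_continuous]).
    lra. }
  rewrite Hsplit. eapply Rle_trans; [apply Rabs_triang |].
  pose proof (picard_limit_approx (S n) x Hx) as Happrox.
  assert (Hint : Rabs (RInt (fun t => G t (picard n t) - flow t) d x)
                 <= (x - d) * (L * (2 * A * (/2) ^ n * weight x))).
  { apply abs_RInt_le_const; [exact Hx | |].
    - apply ex_RInt_of_continuous. intro t.
      apply (continuous_minus (fun t => G t (picard n t)));
        [apply picard_continuous | apply flow_continuous].
    - intros t Ht. unfold flow. eapply Rle_trans; [apply G_lipschitz |].
      apply Rmult_le_compat_l; [exact HL |]. rewrite Rabs_minus_sym.
      eapply Rle_trans; [apply picard_limit_approx; lra |].
      apply Rmult_le_compat_l; [| apply weight_monotone; lra].
      pose proof A_nonneg. pose proof (pow_lt (/2) n ltac:(lra)). nra. }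
  simpl pow in Happrox.
  replace ((A * weight x + (x - d) * (L * (2 * A * weight x))) * (/2) ^ n)
    with (2 * A * (/2 * (/2) ^ n) * weight x + (x - d) * (L * (2 * A * (/2) ^ n * weight x))) by field.
  lra.
Qed.

Hypothesis G_nonneg : forall t z, 0 <= G t z.

Lemma picard_limit_ge x : d <= x -> c <= picard_limit x.
Proof.
  intros Hx. rewrite picard_limit_integral by exact Hx.
  assert (0 <= RInt flow d x); [| lra].
  apply RInt_ge_0; [exact Hx | apply ex_RInt_of_continuous, flow_continuous | intros; apply G_nonneg].
Qed.

Lemma integral_flow_derive y : is_derive (fun y => RInt flow d y) y (flow y).
Proof.
  apply (is_derive_RInt flow _ d); [| apply flow_continuous].
  exists (mkposreal 1 Rlt_0_1). intros b _.
  apply (RInt_correct (V := R_CompleteNormedModule)), ex_RInt_of_continuous, flow_continuous.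
Qed.

Lemma picard_limit_derive x : d < x -> is_derive picard_limit x (G x (picard_limit x)).
Proof.
  intros Hx. apply (is_derive_ext_loc (fun y => c + RInt flow d y)).
  - assert (Hgap : 0 < x - d) by lra. exists (mkposreal _ Hgap). intros y Hy.
    change (Rabs (y - x) < x - d) in Hy. apply Rabs_lt_between' in Hy.
    symmetry. apply picard_limit_integral. lra.
  - replace (G x (picard_limit x)) with (0 + flow x) by (unfold flow; ring).
    apply (is_derive_plus (fun _ => c)); [| apply integral_flow_derive].
    apply (is_derive_const (K := R_AbsRing) (V := R_NormedModule)).
Qed.

Lemma picard_limit_right_derive :
  filterlim (fun h => (picard_limit (d + h) - picard_limit d) / h) (at_right 0) (locally (G d c)).
Proof.
  apply filterlim_locally. intros eps.
  destruct (proj1 (is_derive_Reals _ _ _) (integral_flow_derive d) eps (cond_pos eps))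
    as [delta Hdelta].
  exists delta. intros h Hh Hpos. change (Rabs (h - 0) < delta) in Hh. rewrite Rminus_0_r in Hh.
  specialize (Hdelta h ltac:(lra) Hh).
  unfold flow in Hdelta. rewrite picard_limit_below, RInt_point in Hdelta by lra.
  rewrite picard_limit_integral, picard_limit_below by lra.
  change (Rabs ((c + RInt flow d (d + h) - c) / h - G d c) < eps).
  unfold zero in Hdelta; simpl in Hdelta.
  replace (c + RInt flow d (d + h) - c) with (RInt flow d (d + h) - 0) by lra. exact Hdelta.
Qed.

End Picard.

(* The right-hand side of the ODE has the shape (a u + s / u) / (b phi + k u)
   with a, b, k > 0 and s = phi^p > 0. *)
Definition rational_field (a b k s phi u : R) : R := (a * u + s / u) / (b * phi + k * u).

Section RationalField.

Variables (a b k s phi : R).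
Hypotheses (Ha : 0 < a) (Hb : 0 < b) (Hk : 0 < k) (Hs : 0 < s) (Hphi : 0 < phi).

Lemma rational_field_pos u : 0 < u -> 0 < rational_field a b k s phi u.
Proof.
  intros Hu. unfold rational_field. apply Rdiv_lt_0_compat; [| nra].
  assert (0 < s / u) by (apply Rdiv_lt_0_compat; assumption). nra.
Qed.

Lemma rational_field_bound c u : 0 < c -> c <= u ->
  rational_field a b k s phi u <= a / k + s / (k * c ^ 2).
Proof.
  intros Hc Hcu. unfold rational_field.
  assert (Hnum : 0 < a * u + s / u) by (assert (0 < s / u) by (apply Rdiv_lt_0_compat; lra); nra).
  apply Rle_trans with ((a * u + s / u) / (k * u)).
  { apply Rmult_le_compat_l; [lra |]. apply Rinv_le_contravar; nra. }
  replace ((a * u + s / u) / (k * u)) with (a / k + s / (k * u ^ 2)) by (field; lra).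
  apply Rplus_le_compat_l, Rmult_le_compat_l; [lra |].
  apply Rinv_le_contravar; [apply Rmult_lt_0_compat; [lra | apply pow_lt; lra] |].
  apply Rmult_le_compat_l; [lra | apply pow_incr; lra].
Qed.

Lemma rational_field_lipschitz c u1 u2 : 0 < c -> c <= u1 -> c <= u2 ->
  Rabs (rational_field a b k s phi u1 - rational_field a b k s phi u2)
  <= 2 * (a + s / c ^ 2) / (b * phi) * Rabs (u1 - u2).
Proof.
  intros Hc Hc1 Hc2.
  set (F2 := rational_field a b k s phi u2).
  assert (HF2 : k * F2 <= a + s / c ^ 2).
  { apply Rle_trans with (k * (a / k + s / (k * c ^ 2))).
    - apply Rmult_le_compat_l; [lra | apply rational_field_bound; assumption].
    - right. field. lra. }
  assert (HF2pos : 0 < F2) by (apply rational_field_pos; lra).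
  assert (Hprod : s / (u1 * u2) <= s / c ^ 2).
  { apply Rmult_le_compat_l; [lra |]. apply Rinv_le_contravar; [apply pow_lt; lra | simpl; nra]. }
  assert (Hprod_pos : 0 < s / (u1 * u2)) by (apply Rdiv_lt_0_compat; nra).
  assert (Hdecomp : rational_field a b k s phi u1 - F2
                    = (u1 - u2) * (a - s / (u1 * u2) - k * F2) / (b * phi + k * u1)).
  { unfold F2, rational_field. field. repeat split; nra. }
  rewrite Hdecomp. unfold Rdiv. rewrite !Rabs_mult, Rabs_inv, (Rabs_right (b * phi + k * u1)) by nra.
  assert (Hnum : Rabs (a - s / (u1 * u2) - k * F2) <= 2 * (a + s / c ^ 2)) by (split_Rabs; nra).
  assert (Hden : / (b * phi + k * u1) <= / (b * phi)) by (apply Rinv_le_contravar; nra).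
  pose proof (Rabs_pos (u1 - u2)). pose proof (Rabs_pos (a - s / (u1 * u2) - k * F2)).
  assert (0 < / (b * phi)) by (apply Rinv_0_lt_compat; nra).
  assert (0 < / (b * phi + k * u1)) by (apply Rinv_0_lt_compat; nra).
  apply Rle_trans with (Rabs (u1 - u2) * (2 * (a + s / c ^ 2)) * / (b * phi)).
  - apply Rmult_le_compat; [nra | lra | apply Rmult_le_compat_l; lra | exact Hden].
  - apply Req_le. unfold Rdiv. ring.
Qed.

End RationalField.

Lemma rpow_exp x y : 0 < x -> rpow x y = exp (y * ln x).
Proof. intros Hx. unfold rpow. destruct (Rlt_dec 0 x); [reflexivity | lra]. Qed.

Lemma rpow_pos x y : 0 < x -> 0 < rpow x y.
Proof. intros Hx. rewrite rpow_exp by exact Hx. apply exp_pos. Qed.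

(* For an exponent in [0, 1], x^y <= max 1 x <= 1 + x. *)
Lemma rpow_le_1_plus x y : 0 < x -> 0 <= y <= 1 -> rpow x y <= 1 + x.
Proof.
  intros Hx Hy. rewrite rpow_exp by exact Hx. destruct (Rle_dec (ln x) 0).
  - apply Rle_trans with (exp 0); [apply exp_monotone; nra | rewrite exp_0; lra].
  - apply Rle_trans with (exp (ln x)); [apply exp_monotone; nra | rewrite exp_ln; lra].
Qed.

Section OdeField.

Variables (p beta : R).
Hypotheses (Hp : 0 < p < 1/2) (Hbeta : beta < 0).

Lemma alpha_gt_1 : 1 < alpha p.
Proof.
  unfold alpha. apply Rmult_lt_reg_r with (2 - p); [lra |].
  unfold Rdiv. rewrite Rmult_assoc, Rinv_l by lra. lra.
Qed.

Let a := alpha p ^ 2.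
Let b := alpha p * (alpha p - 1).
Let k := - beta.

Lemma coefficients_pos : 0 < a /\ 0 < b /\ 0 < k.
Proof. pose proof alpha_gt_1. unfold a, b, k. repeat split; nra. Qed.

Lemma ode_rhs_rational x z : ode_rhs p beta x z = rational_field a b k (rpow x p) x z.
Proof. unfold ode_rhs, rational_field, a, b, k. f_equal. ring. Qed.

Lemma ode_rhs_pos x z : 0 < x -> 0 < z -> 0 < ode_rhs p beta x z.
Proof.
  intros Hx Hz. destruct coefficients_pos as (Ha & Hb & Hk). rewrite ode_rhs_rational.
  apply rational_field_pos; auto using rpow_pos.
Qed.

Lemma ode_defined_pos x z : 0 < x -> 0 < z -> ode_defined p beta x z.
Proof.
  intros Hx Hz. destruct coefficients_pos as (_ & Hb & _). unfold b in Hb.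
  split; [lra | nra].
Qed.

Lemma ode_rhs_continuous (P U : R -> R) t :
  (forall y, 0 < P y) -> (forall y, 0 < U y) -> continuous P t -> continuous U t ->
  continuous (fun y => ode_rhs p beta (P y) (U y)) t.
Proof.
  intros HP HU HPc HUc. unfold ode_rhs.
  assert (Hpow : continuous (fun y => rpow (P y) p) t).
  { apply (continuous_ext (fun y => exp (p * ln (P y)))); [intro y; rewrite rpow_exp; auto |].
    apply (continuous_comp P (fun x => exp (p * ln x))); [exact HPc |].
    apply (ex_derive_continuous (K := R_AbsRing) (V := R_NormedModule)).
    auto_derive. apply HP. }
  assert (Hden : alpha p * (alpha p - 1) * P t - beta * U t <> 0)
    by (apply (ode_defined_pos (P t) (U t)); auto).
  apply (continuous_mult (fun y => alpha p ^ 2 * U y + rpow (P y) p / U y)).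
  - apply (continuous_plus (fun y => alpha p ^ 2 * U y)).
    + apply (continuous_mult (fun _ => alpha p ^ 2)); [apply continuous_const | exact HUc].
    + apply (continuous_mult (fun y => rpow (P y) p)); [exact Hpow |].
      apply continuous_Rinv_comp; [exact HUc | apply Rgt_not_eq, HU].
  - apply continuous_Rinv_comp; [| exact Hden].
    apply (continuous_minus (fun y => alpha p * (alpha p - 1) * P y)).
    + apply (continuous_mult (fun _ => alpha p * (alpha p - 1))); [apply continuous_const | exact HPc].
    + apply (continuous_mult (fun _ => beta)); [apply continuous_const | exact HUc].
Qed.


Section Truncation.

Variables (c dl : R).
Hypotheses (Hc : 0 < c) (Hdl : 0 < dl).

Definition truncated_field t z := ode_rhs p beta (Rmax t dl) (Rmax z c).

Lemma Rmax_dl_pos t : 0 < Rmax t dl.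
Proof. eapply Rlt_le_trans; [exact Hdl | apply Rmax_r]. Qed.

Lemma Rmax_c_pos z : 0 < Rmax z c.
Proof. eapply Rlt_le_trans; [exact Hc | apply Rmax_r]. Qed.

Lemma truncated_field_nonneg t z : 0 <= truncated_field t z.
Proof. left. apply ode_rhs_pos; [apply Rmax_dl_pos | apply Rmax_c_pos]. Qed.

Lemma truncated_field_agrees t z : dl <= t -> c <= z -> truncated_field t z = ode_rhs p beta t z.
Proof. intros Ht Hz. unfold truncated_field. rewrite !Rmax_left by assumption. reflexivity. Qed.

Definition growth_slope := / (k * c ^ 2).
Definition growth_intercept := a / k + growth_slope.

Lemma growth_slope_pos : 0 < growth_slope.
Proof.
  destruct coefficients_pos as (_ & _ & Hk). unfold growth_slope.
  apply Rinv_0_lt_compat, Rmult_lt_0_compat; [exact Hk | apply pow_lt, Hc].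
Qed.

Lemma growth_intercept_nonneg : 0 <= growth_intercept.
Proof.
  destruct coefficients_pos as (Ha & _ & Hk). pose proof growth_slope_pos.
  assert (0 < a / k) by (apply Rdiv_lt_0_compat; assumption). unfold growth_intercept. lra.
Qed.

Lemma truncated_field_growth t z :
  Rabs (truncated_field t z) <= growth_intercept + growth_slope * Rmax t dl.
Proof.
  destruct coefficients_pos as (Ha & Hb & Hk).
  pose proof (Rmax_dl_pos t) as Ht. pose proof growth_slope_pos.
  rewrite Rabs_right by apply Rle_ge, truncated_field_nonneg.
  unfold truncated_field. rewrite ode_rhs_rational.
  eapply Rle_trans.
  { apply (rational_field_bound _ _ _ _ _ Ha Hb Hk (rpow_pos _ p Ht) Ht c); [exact Hc | apply Rmax_r]. }
  assert (Hs : rpow (Rmax t dl) p <= 1 + Rmax t dl) by (apply rpow_le_1_plus; lra).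
  replace (rpow (Rmax t dl) p / (k * c ^ 2)) with (rpow (Rmax t dl) p * growth_slope) by reflexivity.
  unfold growth_intercept. nra.
Qed.

Definition truncation_lipschitz := 2 * (a / dl + (/ dl + 1) / c ^ 2) / b.

Lemma truncation_lipschitz_nonneg : 0 <= truncation_lipschitz.
Proof.
  destruct coefficients_pos as (Ha & Hb & Hk). unfold truncation_lipschitz.
  assert (0 < / dl) by (apply Rinv_0_lt_compat, Hdl).
  assert (0 < / c ^ 2) by (apply Rinv_0_lt_compat, pow_lt, Hc).
  assert (0 < a / dl) by (apply Rdiv_lt_0_compat; assumption).
  unfold Rdiv. apply Rmult_le_pos; [nra | left; apply Rinv_0_lt_compat, Hb].
Qed.

Lemma truncated_field_lipschitz t z1 z2 :
  Rabs (truncated_field t z1 - truncated_field t z2) <= truncation_lipschitz * Rabs (z1 - z2).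
Proof.
  destruct coefficients_pos as (Ha & Hb & Hk).
  set (phi := Rmax t dl). assert (Hphi : 0 < phi) by apply Rmax_dl_pos.
  assert (Hphi_dl : dl <= phi) by apply Rmax_r.
  unfold truncated_field. fold phi. rewrite !ode_rhs_rational.
  eapply Rle_trans.
  { apply (rational_field_lipschitz _ _ _ _ _ Ha Hb Hk (rpow_pos _ p Hphi) Hphi c);
      [exact Hc | apply Rmax_r ..]. }
  eapply Rle_trans;
    [| apply Rmult_le_compat_l; [apply truncation_lipschitz_nonneg | apply Rmax_lipschitz]].
  apply Rmult_le_compat_r; [apply Rabs_pos |]. unfold truncation_lipschitz.
  (* w = 1/phi <= 1/dl and phi^p <= 1 + phi give
     (a + phi^p / c^2) / phi <= a / dl + (1/dl + 1) / c^2 *)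
  set (w := / phi). assert (Hw : 0 < w) by (apply Rinv_0_lt_compat, Hphi).
  assert (Hw_dl : w <= / dl) by (apply Rinv_le_contravar; assumption).
  assert (Hsw : rpow phi p * w <= w + 1).
  { assert (Hs : rpow phi p <= 1 + phi) by (apply rpow_le_1_plus; lra).
    assert (phi * w = 1) by (unfold w; field; lra). nra. }
  assert (Hc2 : 0 < / c ^ 2) by (apply Rinv_0_lt_compat, pow_lt, Hc).
  assert (Hb' : 0 < / b) by (apply Rinv_0_lt_compat, Hb).
  replace (2 * (a + rpow phi p / c ^ 2) / (b * phi))
    with (2 * (a * w + rpow phi p * w * / c ^ 2) * / b) by (unfold w; field; lra).
  unfold Rdiv. apply Rmult_le_compat_r; [lra |]. apply Rmult_le_compat_l; [lra |].
  apply Rplus_le_compat; [apply Rmult_le_compat_l; lra | apply Rmult_le_compat_r; lra].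
Qed.

Lemma truncated_field_continuous (Y : R -> R) :
  (forall x, continuous Y x) -> forall t, continuous (fun t => truncated_field t (Y t)) t.
Proof.
  intros HY t. apply ode_rhs_continuous; [apply Rmax_dl_pos | intro; apply Rmax_c_pos | |].
  - apply (continuous_Rmax (fun y => y)), continuous_id.
  - apply continuous_Rmax, HY.
Qed.

End Truncation.

End OdeField.

Lemma is_derive_glue (f g : R -> R) d l :
  f d = g d ->
  filterlim (fun h => (f (d + h) - f d) / h) (at_left 0) (locally l) ->
  filterlim (fun h => (g (d + h) - g d) / h) (at_right 0) (locally l) ->
  is_derive (fun x => if Rle_dec x d then f x else g x) d l.
Proof.
  intros Hfg Hleft Hright. apply is_derive_Reals. intros eps Heps.
  destruct (proj1 (filterlim_locally _ _) Hleft (mkposreal eps Heps)) as [e1 He1].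
  destruct (proj1 (filterlim_locally _ _) Hright (mkposreal eps Heps)) as [e2 He2].
  assert (He : 0 < Rmin e1 e2) by (apply Rmin_pos; apply cond_pos).
  exists (mkposreal _ He). intros h Hh0 Hh. simpl in Hh.
  assert (Hball1 : ball 0 e1 h).
  { change (Rabs (h - 0) < e1). rewrite Rminus_0_r. eapply Rlt_le_trans; [exact Hh | apply Rmin_l]. }
  assert (Hball2 : ball 0 e2 h).
  { change (Rabs (h - 0) < e2). rewrite Rminus_0_r. eapply Rlt_le_trans; [exact Hh | apply Rmin_r]. }
  destruct (Rle_dec d d) as [_ | Hn]; [| lra].
  destruct (Rle_dec (d + h) d) as [Hle | Hgt].
  - exact (He1 h Hball1 ltac:(lra)).
  - rewrite Hfg. exact (He2 h Hball2 ltac:(lra)).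
Qed.

Lemma gamma_beta_pos p beta : 0 < p -> beta < 0 -> 0 < gamma_beta p beta.
Proof.
  intros Hp Hb. unfold gamma_beta. apply rpow_pos, Rdiv_lt_0_compat; [lra |].
  rewrite Rabs_left by exact Hb. nra.
Qed.

(* If |z x - g x^r| <= x^q on (0, delta] with g > 0 and q > r, then z is positive
   at some point of (0, delta): near 0, x^q is negligible against g x^r. *)
Lemma positive_near_zero (z : R -> R) g r q delta :
  0 < g -> r < q -> 0 < delta ->
  (forall x, 0 < x <= delta -> Rabs (z x - g * rpow x r) <= rpow x q) ->
  exists x0, 0 < x0 < delta /\ 0 < z x0.
Proof.
  intros Hg Hrq Hd Hbound.
  set (e := q - r).
  set (m := Rmin (ln (delta / 2)) (ln g / e - 1)).
  assert (Hm : exp m <= delta / 2).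
  { rewrite <- (exp_ln (delta / 2)) by lra. apply exp_monotone, Rmin_l. }
  assert (Hsmall : exp (e * m) < g).
  { rewrite <- (exp_ln g) by exact Hg. apply exp_increasing.
    assert (e * m <= e * (ln g / e - 1)) by (apply Rmult_le_compat_l; [unfold e; lra | apply Rmin_r]).
    replace (e * (ln g / e - 1)) with (ln g - e) in H by (field; unfold e; lra). unfold e in *. lra. }
  pose proof (exp_pos m) as Hpos. exists (exp m). split; [lra |].
  specialize (Hbound (exp m) ltac:(lra)).
  rewrite !rpow_exp, !ln_exp in Hbound by exact Hpos.
  replace (q * m) with (r * m + e * m) in Hbound by (unfold e; ring).
  rewrite exp_plus in Hbound. apply Rabs_le_between' in Hbound.
  pose proof (exp_pos (r * m)).
  assert (exp (r * m) * exp (e * m) < g * exp (r * m)) by nra. lra.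
Qed.

Section Continuation.

Variables (p beta delta c : R).
Hypotheses (Hp : 0 < p < 1/2) (Hbeta : beta < 0) (Hdelta : 0 < delta) (Hc : 0 < c).

Definition continuation : R -> R := picard_limit delta c (truncated_field p beta c delta).

Local Ltac picard_hypotheses :=
  first [ lra
        | eapply truncation_lipschitz_nonneg; eassumption
        | apply growth_intercept_nonneg; assumption
        | eapply Rlt_le, growth_slope_pos; eassumption
        | apply truncated_field_continuous; assumption
        | apply truncated_field_lipschitz; assumption
        | apply truncated_field_growth; assumption
        | apply truncated_field_nonneg; assumption ].

Local Ltac apply_picard lemma :=
  apply (lemma delta c (truncation_lipschitz p c delta) (growth_intercept p beta c)
           (growth_slope beta c) (truncated_field p beta c delta));
  try picard_hypotheses.

Lemma continuation_below x : x <= delta -> continuation x = c.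
Proof. intros Hx. apply_picard picard_limit_below. Qed.

Lemma continuation_ge x : delta <= x -> c <= continuation x.
Proof. intros Hx. apply_picard picard_limit_ge. Qed.

Lemma continuation_derive x :
  delta < x -> is_derive continuation x (ode_rhs p beta x (continuation x)).
Proof.
  intros Hx. rewrite <- (truncated_field_agrees p beta c delta) by (try apply continuation_ge; lra).
  apply_picard picard_limit_derive.
Qed.

Lemma continuation_right_derive :
  filterlim (fun h => (continuation (delta + h) - continuation delta) / h) (at_right 0)
    (locally (ode_rhs p beta delta c)).
Proof.
  rewrite <- (truncated_field_agrees p beta c delta) by lra.
  apply_picard picard_limit_right_derive.
Qed.

End Continuation.

Section Extension.

Variables (p beta delta : R) (zeta : R -> R).
Hypotheses (Hp : 0 < p < 1/2) (Hbeta : beta < 0) (Hdelta : 0 < delta).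
Hypothesis zeta_continuous : forall x, 0 <= x <= delta ->
  filterlim zeta (within (fun y => 0 <= y <= delta) (locally x)) (locally (zeta x)).
Hypothesis zeta_defined : forall x, 0 < x <= delta -> ode_defined p beta x (zeta x).
Hypothesis zeta_somewhere_pos : exists x0, 0 < x0 < delta /\ 0 < zeta x0.

(* zeta never vanishes on (0, delta] and is positive somewhere, hence everywhere. *)
Lemma zeta_pos x : 0 < x <= delta -> 0 < zeta x.
Proof.
  intros Hx. destruct zeta_somewhere_pos as [x0 [Hx0 Hzeta0]].
  apply (positive_on_segment zeta (fun y => 0 <= y <= delta) (Rmin x0 x) (Rmax x0 x) x0 x);
    [split; [apply Rmin_l | apply Rmax_l] | split; [apply Rmin_r | apply Rmax_r] | | | | exact Hzeta0].
  all: intros y [Hy1 Hy2].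
  all: assert (0 < Rmin x0 x) by (apply Rmin_glb_lt; lra).
  all: assert (Rmax x0 x <= delta) by (apply Rmax_lub; lra).
  - lra.
  - apply zeta_continuous. lra.
  - apply zeta_defined. lra.
Qed.

Definition extension x := if Rle_dec x delta then zeta x else continuation p beta delta (zeta delta) x.

Lemma extension_pos x : 0 < x -> 0 < extension x.
Proof.
  intros Hx. unfold extension. destruct (Rle_dec x delta).
  - apply zeta_pos. lra.
  - apply Rlt_le_trans with (zeta delta); [apply zeta_pos; lra |].
    apply continuation_ge; [assumption | assumption | assumption | apply zeta_pos; lra | lra].
Qed.

Hypothesis zeta_derive : forall x, 0 < x < delta -> is_derive zeta x (ode_rhs p beta x (zeta x)).
Hypothesis zeta_left_derive :
  filterlim (fun h => (zeta (delta + h) - zeta delta) / h) (at_left 0)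
    (locally (ode_rhs p beta delta (zeta delta))).

Lemma extension_derive x : 0 < x -> is_derive extension x (ode_rhs p beta x (extension x)).
Proof.
  intros Hx. assert (Hc : 0 < zeta delta) by (apply zeta_pos; lra).
  destruct (Rtotal_order x delta) as [Hlt | [-> | Hgt]].
  -
    unfold extension at 2. destruct (Rle_dec x delta) as [_ | Hn]; [| lra].
    apply (is_derive_ext_loc zeta); [| apply zeta_derive; lra].
    assert (Hgap : 0 < delta - x) by lra. exists (mkposreal _ Hgap). intros y Hy.
    change (Rabs (y - x) < delta - x) in Hy. apply Rabs_lt_between' in Hy.
    unfold extension. destruct (Rle_dec y delta); [reflexivity | lra].
  - unfold extension at 2. destruct (Rle_dec delta delta) as [_ | Hn]; [| lra].
    apply is_derive_glue; [symmetry; apply continuation_below; auto; lra | exact zeta_left_derive |].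
    apply continuation_right_derive; assumption.
  - unfold extension at 2. destruct (Rle_dec x delta) as [Hn | _]; [lra |].
    apply (is_derive_ext_loc (continuation p beta delta (zeta delta)));
      [| apply continuation_derive; assumption].
    assert (Hgap : 0 < x - delta) by lra. exists (mkposreal _ Hgap). intros y Hy.
    change (Rabs (y - x) < x - delta) in Hy. apply Rabs_lt_between' in Hy.
    unfold extension. destruct (Rle_dec y delta); [lra | reflexivity].
Qed.

(* A positive derivative on (0, oo) makes the extension increasing there. *)
Lemma extension_monotone x y : 0 < x -> x <= y -> extension x <= extension y.
Proof.
  intros Hx [Hxy | ->]; [left | lra].
  apply (incr_function extension (Finite 0) p_infty (fun x => ode_rhs p beta x (extension x)));
    [intros z Hz _ .. | exact Hx | exact Hxy | exact I].
  - apply extension_derive, Hz.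
  - apply ode_rhs_pos; [assumption | assumption | exact Hz | apply extension_pos, Hz].
Qed.

End Extension.

Theorem proposition7p2 (p beta q delta : R) (zeta : R -> R) :
  0 < p < 1/2 -> beta < 0 -> (p + 1) / 3 < q < 1 -> 0 < delta ->
  (* zeta in C([0, delta]) *)
  (forall x, 0 <= x <= delta ->
     filterlim zeta (within (fun y => 0 <= y <= delta) (locally x)) (locally (zeta x))) ->
  zeta 0 = 0 ->
  (forall x, 0 <= x <= delta ->
     Rabs (zeta x - gamma_beta p beta * rpow x ((p + 1) / 3)) <= rpow x q) ->
  (* ODE on (0, delta]: two-sided derivative on (0,delta), left derivative at delta *)
  (forall x, 0 < x <= delta -> ode_defined p beta x (zeta x)) ->
  (forall x, 0 < x < delta -> is_derive zeta x (ode_rhs p beta x (zeta x))) ->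
  filterlim (fun h => (zeta (delta + h) - zeta delta) / h) (at_left 0)
    (locally (ode_rhs p beta delta (zeta delta))) ->
  exists Z : R -> R,
    (forall x, 0 <= x <= delta -> Z x = zeta x) /\
    (forall x, 0 < x -> ode_defined p beta x (Z x) /\
                        is_derive Z x (ode_rhs p beta x (Z x))) /\
    (forall x, 0 < x -> 0 < Z x) /\
    (forall x y, 0 < x -> x <= y -> Z x <= Z y).
Proof.
  intros Hp Hbeta Hq Hdelta Hcont _ Hasym Hdef Hder Hleft.
  (* The asymptotics zeta ~ gamma_beta phi^((p+1)/3) make zeta positive near 0. *)
  assert (Hsome : exists x0, 0 < x0 < delta /\ 0 < zeta x0).
  { apply (positive_near_zero zeta (gamma_beta p beta) ((p + 1) / 3) q delta);
      [apply gamma_beta_pos; lra | lra | exact Hdelta |].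
    intros x Hx. apply Hasym. lra. }
  exists (extension p beta delta zeta). split; [| split; [| split]].
  - intros x Hx. unfold extension. destruct (Rle_dec x delta); [reflexivity | lra].
  - intros x Hx.
    assert (Hpos : 0 < extension p beta delta zeta x) by (apply extension_pos; assumption).
    split; [apply ode_defined_pos | apply extension_derive]; assumption.
  - intros x Hx. apply extension_pos; assumption.
  - intros x y Hx Hxy. apply extension_monotone; assumption.
Qed.
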